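(* Let $T=T(n,a,b)$ with $a\ge 0$, $b\ge a+2$ and $2(a+b)<n-1$, and let $\ell=n-a-b$ and $r=\ell-b-a$. If $b<\frac{\ell}{2}$, then $$\rho(T)>(2a+1)(r-1)+\frac{r}{r-1}\sum_{i=1}^{\lfloor\frac{r-1}{2}\rfloor}(r-2i).$$
   Context: Hypergraphs have edges that are vertex subsets of size at least two; distance $d_T(u,v)$ in a hypertree is the length of a shortest loose path (an alternating sequence of distinct vertices and distinct edges $(v_0,e_1,v_1,\dots,e_p,v_p)$ with $v_{i-1},v_i\in e_i$ and non-consecutive edges disjoint). $\rho(T)$ is the largest eigenvalue of the distance matrix $D(T)=(d_T(u,v))_{u,v}$. For integers $n,a,b$ with $0\le a\le b$ and $a+b\le\lfloor\frac{n-1}{2}\rfloor$, put $\ell=n-a-b$ and $I=\{1,\dots,a\}\cup\{\ell-b,\dots,\ell-1\}$; $T(n,a,b)$ is the hypertree with vertex set $\{v_1,\dots,v_\ell\}\cup\{w_i:i\in I\}$ and edges $\{v_i,w_i,v_{i+1}\}$ for $i\in I$ and $\{v_i,v_{i+1}\}$ for $i\in\{1,\dots,\ell-1\}\setminus I$. *)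

From HB Require Import structures.
From mathcomp Require Import all_boot all_order all_algebra.
From mathcomp Require Import reals.
Set Implicit Arguments. Unset Strict Implicit. Unset Printing Implicit Defensive.
Import Order.TTheory GRing.Theory Num.Theory.

(* x : vertices v_0..v_p, e : edges e_1..e_p (e i is the edge e_{i+1}).
   Conditions: vertices distinct, edges distinct, each edge in E,
   v_{i-1}, v_i in e_i, non-consecutive edges disjoint. *)
Definition loose_path (V : finType) (E : seq {set V}) (p : nat)
  (x : {ffun 'I_p.+1 -> V}) (e : {ffun 'I_p -> {set V}}) : bool :=
  [&& injectiveb x, injectiveb e,
      [forall i : 'I_p, [&& e i \in E, x (inord i) \in e i & x (inord i.+1) \in e i]]
    & [forall i : 'I_p, forall j : 'I_p, (i.+1 < j)%N ==> [disjoint e i & e j]]].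

Definition has_loose_path (V : finType) (E : seq {set V}) (u v : V) (p : nat) : bool :=
  [exists x : {ffun 'I_p.+1 -> V}, exists e : {ffun 'I_p -> {set V}},
     [&& x ord0 == u, x ord_max == v & loose_path E x e]].

(* d(u,v) = length of a shortest loose path from u to v (a loose path has
   distinct vertices, so its length is < #|V|; the value #|V| only occurs
   for disconnected pairs, which do not arise in a hypertree). *)
Definition hdist (V : finType) (E : seq {set V}) (u v : V) : nat :=
  find (has_loose_path E u v) (iota 0 #|V|).

Definition dist_matrix (R : realType) (n : nat) (E : seq {set 'I_n}) : 'M[R]_n :=
  \matrix_(i, j) ((hdist E i j)%:R)%R.

Definition is_largest_eigenvalue (R : realType) (n : nat) (A : 'M[R]_n) (rho : R) : Prop :=
  eigenvalue A rho /\ forall mu : R, eigenvalue A mu -> (mu <= rho)%R.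

(* Vertices are 'I_n.  v_j (1 <= j <= l) is the vertex j-1;
   w_i for i in {1..a} is the vertex l+i-1, and
   w_i for i in {l-b..l-1} is the vertex l+a+(i-(l-b)). *)
Definition Tell (n a b : nat) : nat := n - a - b.

Definition inI (n a b i : nat) : bool :=
  ((1 <= i <= a) || (Tell n a b - b <= i <= Tell n a b - 1))%N.

Definition wvert (n a b i : nat) : nat :=
  if (i <= a)%N then (Tell n a b + i - 1)%N
  else (Tell n a b + a + (i - (Tell n a b - b)))%N.

Definition nat_set (n : nat) (s : seq nat) : {set 'I_n} :=
  [set x : 'I_n | val x \in s].

(* edges {v_i, w_i, v_{i+1}} for i in I, {v_i, v_{i+1}} otherwise, 1 <= i <= l-1 *)
Definition T_edges (n a b : nat) : seq {set 'I_n} :=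
  [seq nat_set n (if inI n a b i then [:: i.-1; wvert n a b i; i] else [:: i.-1; i])
  | i <- iota 1 (Tell n a b - 1)].

From HB Require Import structures.
From mathcomp Require Import all_boot all_order all_algebra zify ring lra.
From mathcomp Require Import reals boolp classical_sets topology normedtype derive.
Set Implicit Arguments. Unset Strict Implicit. Unset Printing Implicit Defensive.
Import Order.TTheory GRing.Theory Num.Theory numFieldNormedType.Exports.

(* By the Rayleigh principle, the largest eigenvalue of a real symmetric matrix
   D is the maximum of v D v^T / v v^T over v <> 0 (it is attained, by
   compactness of the unit sphere, and a maximiser is an eigenvector).  Test it
   on the indicator vector of the spine v_1, ..., v_l of T.  Every edge of T
   lies over two consecutive spine positions (w_i sits over v_i), so along a
   loose path the position moves by at most one per edge and
   d_T(v_i, v_j) >= |i - j|; hence rho(T) >= sum_{i,j<l} |i - j| / l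
   = (l^2 - 1) / 3.  Finally sum_i (r - 2i) <= (r - 1)^2 / 4 and
   l >= r + 2a + 2 put the claimed bound strictly below (l^2 - 1) / 3. *)

Section LoosePath.
Variables (V : finType) (E : seq {set V}).

Lemma loose_path_rev p x e : loose_path E x e ->
  loose_path E [ffun i : 'I_p.+1 => x (rev_ord i)] [ffun i : 'I_p => e (rev_ord i)].
Proof.
case/and4P => x_inj e_inj /forallP e_link /forallP e_disj.
apply/and4P; split.
- by apply/injectiveP => i j; rewrite !ffunE => /(injectiveP _ x_inj) /rev_ord_inj.
- by apply/injectiveP => i j; rewrite !ffunE => /(injectiveP _ e_inj) /rev_ord_inj.
- apply/forallP => i; rewrite !ffunE.
  have lt_ip := ltn_ord i.
  have [-> xi xSi] := and3P (e_link (rev_ord i)).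
  rewrite (_ : rev_ord (inord i) = inord (rev_ord i).+1); last first.
    by apply: val_inj; rewrite /= !inordK //=; lia.
  rewrite (_ : rev_ord (inord i.+1) = inord (rev_ord i)) ?xi ?xSi //.
  by apply: val_inj; rewrite /= !inordK //=; lia.
- apply/forallP => i; apply/forallP => j; rewrite !ffunE; apply/implyP => lt_ij.
  rewrite disjoint_sym; apply: (implyP (forallP (e_disj (rev_ord j)) (rev_ord i))).
  by have := ltn_ord i; have := ltn_ord j; rewrite /=; lia.
Qed.

Lemma has_loose_path_sym u v p : has_loose_path E u v p -> has_loose_path E v u p.
Proof.
case/existsP => x /existsP [e /and3P [/eqP xu /eqP xv path_xe]].
apply/existsP; exists [ffun i : 'I_p.+1 => x (rev_ord i)].
apply/existsP; exists [ffun i : 'I_p => e (rev_ord i)].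
rewrite !ffunE loose_path_rev // andbT.
rewrite (_ : rev_ord ord0 = ord_max); last by apply: val_inj; rewrite /= subn1.
rewrite (_ : rev_ord ord_max = ord0); last by apply: val_inj; rewrite /= subnn.
by rewrite xu xv !eqxx.
Qed.

Lemma hdist_sym u v : hdist E u v = hdist E v u.
Proof. by apply: eq_find => k; apply/idP/idP; apply: has_loose_path_sym. Qed.

Variable f : V -> nat.
Hypothesis f_edge : forall e x y, e \in E -> x \in e -> y \in e -> f x <= (f y).+1.
(* [hdist] takes the value #|V| on pairs joined by no loose path. *)
Hypothesis f_lt_card : forall x, f x < #|V|.

Lemma has_loose_path_ge u v p : has_loose_path E u v p -> f u <= f v + p.
Proof.
case/existsP => x /existsP [e /and3P [/eqP xu /eqP xv /and4P [_ _ /forallP e_link _]]].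
suff walk k : k <= p -> f u <= f (x (inord k)) + k.
  by rewrite -xv (_ : ord_max = inord p) ?walk //; apply: val_inj; rewrite /= inordK.
elim: k => [_|k IHk lt_kp].
  by rewrite -xu addn0 (_ : ord0 = inord 0) //; apply: val_inj; rewrite /= inordK.
have /= [e_in xk xSk] := and3P (e_link (Ordinal lt_kp)).
apply: leq_trans (IHk (ltnW lt_kp)) _; rewrite addnS -addSn leq_add2r.
exact: f_edge e_in xk xSk.
Qed.

Lemma hdist_ge u v : f u <= f v + hdist E u v.
Proof.
rewrite /hdist; set P := has_loose_path E u v.
have [hasP|hasNP] := boolP (has P (iota 0 #|V|)).
  have lt_find : find P (iota 0 #|V|) < #|V|.
    by rewrite -[X in _ < X](size_iota 0) -has_find.
  by apply: has_loose_path_ge; have := nth_find 0 hasP; rewrite nth_iota.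
by rewrite (hasNfind hasNP) size_iota; have := f_lt_card u; lia.
Qed.

End LoosePath.

(* The 0-based position over the spine v_1, ..., v_l: w_i lies over v_i. *)
Definition spine_index (n a b k : nat) : nat :=
  if k < Tell n a b then k
  else if k < Tell n a b + a then k - Tell n a b
  else k - a - b - 1.

Lemma spine_index_le n a b k : spine_index n a b k <= k.
Proof. by rewrite /spine_index; case: ifP => // _; case: ifP => _; lia. Qed.

Lemma spine_index_edge n a b : b <= Tell n a b -> forall e (x y : 'I_n),
  e \in T_edges n a b -> x \in e -> y \in e ->
  spine_index n a b x <= (spine_index n a b y).+1.
Proof.
move=> le_bl e x y /mapP [i]; rewrite mem_iota => /andP[i_ge1 i_lt] ->.
suff in_edge z : z \in (if inI n a b i then [:: i.-1; wvert n a b i; i] else [:: i.-1; i]) ->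
    i.-1 <= spine_index n a b z <= i.
  by rewrite !finset.in_set /= => /in_edge /andP[? ?] /in_edge /andP[? ?]; lia.
case: ifP => iI; rewrite !inE; last first.
  by case/orP => /eqP ->; rewrite /spine_index; case: ifPn => ?; try case: ifPn => ?; lia.
case/or3P => /eqP ->; rewrite /spine_index; try by case: ifPn => ?; try case: ifPn => ?; lia.
move: iI; rewrite /inI /wvert; set l := Tell n a b in le_bl i_lt *.
by case: (leqP i a) => ? /=; repeat case: ifPn => ?; lia.
Qed.

Lemma T_hdist_ge n a b (i j : 'I_n) : b <= Tell n a b ->
  i < Tell n a b -> j < Tell n a b -> `|i - j| <= hdist (T_edges n a b) i j.
Proof.
move=> le_bl lt_il lt_jl.
have index_lt_n (x : 'I_n) : spine_index n a b x < #|'I_n|.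
  by rewrite card_ord (leq_ltn_trans (spine_index_le _ _ _ _)).
have := hdist_ge (spine_index_edge le_bl) index_lt_n i j.
have := hdist_ge (spine_index_edge le_bl) index_lt_n j i.
by rewrite hdist_sym /spine_index lt_il lt_jl; lia.
Qed.

Lemma sum_sub_ord_double l : (\sum_(j < l) (l - j)).*2 = l * l.+1.
Proof.
elim: l => [|l IHl]; first by rewrite big_ord0.
rewrite big_ord_recl subn0 (eq_bigr (fun j : 'I_l => l - j)) => [|j _]; last first.
  by rewrite lift0 subSS.
by rewrite doubleD IHl -muln2; lia.
Qed.

Lemma sum_distn l : 3 * \sum_(i < l) \sum_(j < l) `|i - j| + l = l ^ 3.
Proof.
elim: l => [|l IHl]; first by rewrite big_ord0.
rewrite big_ord_recr /=.
rewrite (eq_bigr (fun i : 'I_l => \sum_(j < l) `|i - j| + (l - i))) => [|i _]; last first.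
  by rewrite big_ord_recr /=; congr (_ + _); have := ltn_ord i; lia.
rewrite big_split big_ord_recr /= distnn addn0.
have -> : \sum_(j < l) `|l - j| = \sum_(j < l) (l - j).
  by apply: eq_bigr => j _; have := ltn_ord j; lia.
move: IHl (sum_sub_ord_double l); set G := \sum_(i < l) _; set T := \sum_(j < l) _.
rewrite !expnS expn0 -muln2; nia.
Qed.

Lemma sum_sub_double_le r :
  4 * \sum_(1 <= i < ((r - 1) %/ 2).+1) (r - 2 * i) <= (r - 1) ^ 2.
Proof.
set m := (r - 1) %/ 2.
have le_mr : 2 * m <= r - 1 by rewrite mulnC leq_trunc_div.
have sum_eq : \sum_(1 <= i < m.+1) (r - 2 * i) + m * m.+1 = m * r.
  elim: m le_mr => [|k IHk] le_kr; first by rewrite big_geq.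
  have le_kr' : 2 * k <= r - 1 by lia.
  by rewrite big_nat_recr //=; move: (IHk le_kr') le_kr; nia.
have := (nat_AGM2 m (r - 1 - m)).1.
have -> : m + (r - 1 - m) = r - 1 by lia.
nia.
Qed.

Local Open Scope ring_scope.

Lemma sum_continuous (R : numFieldType) (T : topologicalType) (I : finType) (f : I -> T -> R) :
  (forall i, continuous (f i)) -> continuous (fun x => \sum_i f i x).
Proof.
move=> f_cont x; apply: cvg_big => [|i _]; last exact: f_cont.
exact: (@pseudometric_normed_Zmodule.add_continuous R R^o).
Qed.

Lemma quadratic_le0_coef_eq0 (R : realFieldType) (al be : R) :
  0 <= al -> (forall t, 2 * t * al + t ^+ 2 * be <= 0) -> al = 0.
Proof.
move=> al_ge0 le0; apply/eqP; rewrite eq_le al_ge0 andbT leNgt; apply/negP => al_gt0.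
pose c := `|be| + 1; have c_gt0 : 0 < c by rewrite ltr_pwDr.
pose t := al / c; have t_gt0 : 0 < t by rewrite divr_gt0.
have tc : t * c = al by rewrite mulfVK ?gt_eqF.
have : - `|be| <= be by rewrite lerNl ler_normr lexx orbT.
have := le0 t; rewrite /c in tc; nra.
Qed.

Section BilinearForm.
Variables (R : realDomainType) (n : nat).
Implicit Types (M : 'M[R]_n) (u v : 'rV[R]_n).

Definition bform M u v : R := (u *m M *m v^T) 0 0.

Lemma bform_sym M u v : M^T = M -> bform M u v = bform M v u.
Proof.
move=> M_sym; rewrite /bform; have -> : u *m M *m v^T = (v *m M *m u^T)^T.
  by rewrite !trmx_mul trmxK M_sym mulmxA.
by rewrite mxE.
Qed.

Lemma bformZ M k v : bform M (k *: v) (k *: v) = k ^+ 2 * bform M v v.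
Proof. by rewrite /bform -!scalemxAl linearZ /= -scalemxAr !mxE mulrA -expr2. Qed.

Lemma bform_expand M u v t : M^T = M ->
  bform M (u + t *: v) (u + t *: v) =
  bform M u u + 2 * t * bform M u v + t ^+ 2 * bform M v v.
Proof.
move=> M_sym.
have addE (A B : 'M[R]_1) : (A + B) 0 0 = A 0 0 + B 0 0 by rewrite mxE.
have scaleE k (A : 'M[R]_1) : (k *: A) 0 0 = k * A 0 0 by rewrite mxE.
rewrite /bform linearD /= !(mulmxDl, mulmxDr) linearZ /= -!scalemxAl -!scalemxAr.
rewrite !addE !scaleE -!/(bform _ _ _) (bform_sym v u M_sym); ring.
Qed.

Lemma bform1E v : bform 1%:M v v = \sum_j v 0 j ^+ 2.
Proof. by rewrite /bform mulmx1 !mxE; apply: eq_bigr => j _; rewrite mxE expr2. Qed.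

Lemma bform1_ge0 v : 0 <= bform 1%:M v v.
Proof. by rewrite bform1E sumr_ge0 // => j _; rewrite sqr_ge0. Qed.

Lemma bform1_eq0 v : (bform 1%:M v v == 0) = (v == 0).
Proof.
apply/idP/eqP => [|->]; last by rewrite bform1E big1 // => j _; rewrite mxE expr0n.
rewrite bform1E => /eqP/psumr_eq0P v0; apply/rowP => j.
by apply/eqP; rewrite mxE -sqrf_eq0 v0 // => k _; rewrite sqr_ge0.
Qed.

Definition prefix_indicator l : 'rV[R]_n := \row_j ((j < l)%N)%:R.

Lemma bform_prefix_indicator M l :
  let y := prefix_indicator l in
  bform M y y = \sum_(i < n | (i < l)%N) \sum_(j < n | (j < l)%N) M i j.
Proof.
move=> y; rewrite /bform mxE (eq_bigr (fun j => \sum_i y 0 i * M i j * y 0 j)); last first.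
  by move=> j _; rewrite !mxE mulr_suml; apply: eq_bigr => i _; rewrite mxE.
rewrite exchange_big [RHS]big_mkcond; apply: eq_bigr => i _; rewrite mxE.
case: ltnP => _; last by rewrite big1 // => j _; rewrite !mul0r.
rewrite [RHS]big_mkcond; apply: eq_bigr => j _.
by rewrite mxE mul1r; case: ltnP => _; rewrite ?mulr1 ?mulr0.
Qed.

Lemma bform1_prefix_indicator l : (l <= n)%N ->
  let y := prefix_indicator l in bform 1%:M y y = l%:R.
Proof.
move=> le_ln y; rewrite bform1E -[in RHS](card_ord l) -sumr_const.
rewrite (big_ord_widen _ (fun=> 1) le_ln) [RHS]big_mkcond.
by apply: eq_bigr => j _; rewrite mxE; case: ltnP; rewrite ?expr1n ?expr0n.
Qed.

End BilinearForm.

Section Rayleigh.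
Local Open Scope classical_set_scope.
Variables (R : realType) (n : nat).
Implicit Types (M : 'M[R]_n) (u v w y : 'rV[R]_n).

Lemma bform_continuous M : continuous (fun v => bform M v v).
Proof.
have -> : (fun v => bform M v v) = fun v => \sum_j (\sum_i v 0 i * M i j) * v 0 j.
  by apply/funext => v; rewrite /bform !mxE; apply: eq_bigr => j _; rewrite !mxE.
apply: sum_continuous => j v; apply: continuousM; last exact: coord_continuous.
apply: sum_continuous => i w; apply: continuousM; first exact: coord_continuous.
exact: cst_continuous.
Qed.

Lemma rayleigh_ub_attained M y : y != 0 ->
  exists2 u, u != 0 & forall w, bform M w w <= bform M u u / bform 1%:M u u * bform 1%:M w w.
Proof.
move=> y_neq0; pose sphere := [set v : 'rV[R]_n | `|v| = 1].
have sphere_neq0 v : sphere v -> v != 0.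
  by rewrite /sphere /= => v1; apply/eqP => v0; move: v1; rewrite v0 normr0 => /esym/eqP; rewrite oner_eq0.
have normalize_in w : w != 0 -> `|w|^-1 *: w \in sphere.
  by move=> w0; rewrite inE /sphere /= normrZ normfV normr_id mulVf ?normr_eq0.
have sphere_compact : compact sphere.
  apply: bounded_closed_compact.
    by exists 1; split; [rewrite num_real | move=> N N1 v /= ->; rewrite ltW].
  have -> : sphere = (fun v : 'rV[R]_n => `|v|) @^-1` [set 1] by [].
  by apply: (continuous_closedP _).1; [exact: norm_continuous | exact: closed_eq].
pose g v := bform M v v / bform 1%:M v v.
have g_cont : {within sphere, continuous g}.
  apply: continuous_in_subspaceT => v; rewrite inE => /sphere_neq0 v0.
  apply: (@continuousM _ _ (fun v => bform M v v)); first exact: bform_continuous.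
  apply: continuousV; last exact: bform_continuous.
  by rewrite bform1_eq0.
have [|u /set_mem/sphere_neq0 u0 g_max] := compact_EVT_max _ sphere_compact g_cont.
  by exists (`|y|^-1 *: y); apply/set_mem/normalize_in.
exists u => // w; have [->|w0] := eqVneq w 0.
  by rewrite -(scale0r (0 : 'rV[R]_n)) !bformZ expr0n /= !mul0r mulr0.
have := g_max _ (normalize_in w w0); rewrite /g !bformZ -mulf_div divff ?mul1r.
  by rewrite ler_pdivrMr // lt_def bform1_eq0 w0 bform1_ge0.
by rewrite expf_neq0 // invr_eq0 normr_eq0.
Qed.

Section RayleighMaximum.
Variables (M : 'M[R]_n) (lam : R).
Hypothesis lam_ub : forall w, bform M w w <= lam * bform 1%:M w w.

Lemma rayleigh_max_eigenvector u : M^T = M ->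
  bform M u u = lam * bform 1%:M u u -> u *m M = lam *: u.
Proof.
move=> M_sym u_max; set res := u *m M - lam *: u.
have res_coef : bform M u res - lam * bform 1%:M u res = bform 1%:M res res.
  by rewrite /bform !mulmx1 {3}/res mulmxBl -scalemxAl !mxE.
suff : bform 1%:M res res = 0 by move/eqP; rewrite bform1_eq0 subr_eq0 => /eqP.
apply: (quadratic_le0_coef_eq0 (be := bform M res res - lam * bform 1%:M res res) (bform1_ge0 _)) => t.
have := lam_ub (u + t *: res); rewrite !bform_expand ?trmx1 // u_max -res_coef.
by rewrite -subr_ge0 => ?; rewrite -oppr_ge0; lra.
Qed.

Lemma eigenvalue_le_rayleigh_ub mu : eigenvalue M mu -> mu <= lam.
Proof.
case/eigenvalueP => w wM w0; have := lam_ub w.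
have -> : bform M w w = mu * bform 1%:M w w by rewrite /bform wM mulmx1 -scalemxAl mxE.
by rewrite ler_pM2r // lt_def bform1_eq0 w0 bform1_ge0.
Qed.

End RayleighMaximum.

Lemma rayleigh_largest_eigenvalue M y : M^T = M -> y != 0 ->
  exists lam, is_largest_eigenvalue M lam /\ bform M y y <= lam * bform 1%:M y y.
Proof.
move=> M_sym /(rayleigh_ub_attained M) [u u0 u_max].
set lam := bform M u u / bform 1%:M u u.
have u_eq : bform M u u = lam * bform 1%:M u u.
  by rewrite /lam mulfVK // bform1_eq0.
exists lam; split; last exact: u_max.
split; last by move=> mu; apply: eigenvalue_le_rayleigh_ub.
by apply/eigenvalueP; exists u => //; apply: rayleigh_max_eigenvector.
Qed.

End Rayleigh.

Lemma lt_spectral_target (R : realFieldType) (A Q L S rho : R) :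
  0 <= A -> 2 <= Q -> 0 <= S -> 4 * S <= Q ^+ 2 -> Q + 2 * A + 3 <= L ->
  L ^+ 2 - 1 <= 3 * rho -> (2 * A + 1) * Q + (Q + 1) / Q * S < rho.
Proof.
move=> A_ge0 Q_ge2 S_ge0 le_S le_L le_rho.
have le_QS : (Q + 1) / Q * S <= (Q + 1) * Q / 4.
  rewrite mulrAC ler_pdivrMr; last lra.
  by rewrite mulrAC ler_pdivlMr; [nra | lra].
have le_L2 : (Q + 2 * A + 3) ^+ 2 <= L ^+ 2 by rewrite ler_sqr ?nnegrE; lra.
have := sqr_ge0 (Q - 4 * A); nra.
Qed.

Lemma T_largest_eigenvalue_ge (R : realType) n a b :
  (b <= Tell n a b)%N -> (0 < Tell n a b <= n)%N ->
  exists rho : R, is_largest_eigenvalue (dist_matrix R (T_edges n a b)) rho /\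
    (Tell n a b)%:R ^+ 2 - 1 <= 3 * rho.
Proof.
set l := Tell n a b => le_bl /andP[l_gt0 le_ln].
set D := dist_matrix R (T_edges n a b); set y := prefix_indicator R n l.
have D_sym : D^T = D by apply/matrixP => i j; rewrite !mxE hdist_sym.
have y_norm : bform 1%:M y y = l%:R by apply: bform1_prefix_indicator.
have y_neq0 : y != 0 by rewrite -bform1_eq0 y_norm pnatr_eq0 -lt0n.
have [rho [rho_largest rho_ub]] := rayleigh_largest_eigenvalue D_sym y_neq0.
exists rho; split => //.
have le_sum_distn : (\sum_(i < l) \sum_(j < l) `|i - j|)%:R <= bform D y y.
  rewrite natr_sum (big_ord_widen n (fun i => (\sum_(j < l) `|i - j|)%:R) le_ln).
  rewrite bform_prefix_indicator; apply: ler_sum => i lt_il.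
  rewrite natr_sum (big_ord_widen n (fun j => `|i - j|%:R) le_ln); apply: ler_sum => j lt_jl.
  by rewrite mxE ler_nat T_hdist_ge.
have lR_gt0 : 0 < l%:R :> R by rewrite ltr0n.
have := congr1 (fun k => k%:R : R) (sum_distn l); rewrite /= natrD natrM natrX.
by have := le_trans le_sum_distn rho_ub; rewrite y_norm; nra.
Qed.

Theorem lemma3p4 (R : realType) (n a b : nat) :
  (a + 2 <= b)%N ->
  (2 * (a + b) < n - 1)%N ->
  (2 * b < Tell n a b)%N ->
  let r := (Tell n a b - b - a)%N in
  exists rho : R,
    is_largest_eigenvalue (dist_matrix R (T_edges n a b)) rho /\
    rho > (2 * a + 1)%:R * (r - 1)%:R
          + r%:R / (r - 1)%:R * \sum_(1 <= i < ((r - 1) %/ 2).+1) (r - 2 * i)%:R.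
Proof.
move=> le_ab lt_n lt_bl r; have r_ge3 : (3 <= r)%N by rewrite /r; lia.
have [||rho [rho_largest rho_lb]] := @T_largest_eigenvalue_ge R n a b.
- by lia.
- by rewrite /Tell; lia.
exists rho; split => //.
have -> : r%:R = (r - 1)%:R + 1 :> R by rewrite natr1 subn1 prednK //; lia.
rewrite natrD natrM mulr1n -natr_sum; apply: lt_spectral_target rho_lb => //.
- by rewrite (ler_nat _ 2); lia.
- by have := sum_sub_double_le r; rewrite -(ler_nat R) natrM natrX.
- by rewrite -natrM -!natrD ler_nat /r; lia.
Qed.
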